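(* Let $n,k$ be integers with $1\leq k\leq n-1$. Let $a\in\mathbb{Z}^n$ and $\alpha\in\mathbb{Z}$ be such that $ax\geq\alpha$ is a facet defining inequality of $Q(C_n^k)$ which is neither (a positive multiple of) a boolean facet nor (a positive multiple of) the rank constraint. Put $a^0=\min\{a_i:i\in\mathbb{Z}_n\}$ and $W=\{i\in\mathbb{Z}_n: a_i>a^0\}$, so that the inequality reads $\sum_{i\in W}a_ix_i+a^0\sum_{i\notin W}x_i\geq\alpha$. Then: 1. For every $i\in\mathbb{Z}_n$ there exist (a) a root $\tilde x$ with $i\in\tilde x$, (b) a root $\tilde x$ with $i\notin\tilde x$, and (c) a root $\tilde x$ with $|\tilde x\cap C^i|=2$. 2. Let $i\in W$ and let $\tilde x$ be a root with $i\in\tilde x$. (a) If there exists $j\neq i$ with $j\in\tilde x\cap C^{i-k+1}$, then $[i,j+k]_n\subseteq W$. (b) If there exists $j\neq i$ with $j\in \tilde x\cap C^i$, then $[j-k,i]_n\subseteq W$.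
   Context: $\mathbb{Z}_n=\{0,\dots,n-1\}$ with addition modulo $n$; $(a,b)_n$, $[a,b)_n$, $(a,b]_n$, $[a,b]_n$ denote the $\mathbb{Z}_n$-cyclic intervals of points between $a$ and $b$ (open/closed at the respective ends). For $i\in\mathbb{Z}_n$, $C^i=[i,i+k)_n$, and the circulant matrix $C_n^k$ is the $n\times n$ $0,1$ matrix whose $i$-th row is the incidence vector of $C^i$. A cover of $C_n^k$ is a vector $x\in\{0,1\}^n$ with $C_n^kx\geq\mathbf 1$; vectors in $\{0,1\}^n$ are identified with the subsets of $\mathbb{Z}_n$ they are the characteristic vectors of. $Q(C_n^k)$ is the convex hull of the covers of $C_n^k$. The boolean facets are $x_i\geq0$, $x_i\leq 1$ and $\sum_{j\in C^i}x_j\geq 1$ ($i\in\mathbb{Z}_n$); the rank constraint is $\sum_{i\in\mathbb{Z}_n}x_i\geq\lceil n/k\rceil$. A root of an inequality $ax\geq\alpha$ is a cover $\tilde x$ of $C_n^k$ with $a\tilde x=\alpha$. *)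

From HB Require Import structures.
From mathcomp Require Import all_boot all_order all_algebra.
Set Implicit Arguments. Unset Strict Implicit. Unset Printing Implicit Defensive.
Import Order.TTheory GRing.Theory Num.Theory.
Local Open Scope ring_scope.

(* Z_n is represented by 'I_n; points of Z_n given as integers are reduced mod n. *)

Definition cd (n : nat) (p q : int) : nat := `|((q - p) %% n%:Z)%Z|%N.

Definition Cset (n k : nat) (i : int) : {set 'I_n} :=
  [set j : 'I_n | (cd n i (nat_of_ord j) < k)%N].

Definition cint (n : nat) (a b : int) : {set 'I_n} :=
  [set j : 'I_n | (cd n a (nat_of_ord j) <= cd n a b)%N].

(* x (a subset of Z_n, i.e. a 0/1 vector) is a cover of C_n^k *)
Definition cover (n k : nat) (x : {set 'I_n}) : bool :=
  [forall i : 'I_n, [exists j in Cset n k (nat_of_ord i), j \in x]].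

Definition lhs (n : nat) (a : 'I_n -> int) (x : {set 'I_n}) : int :=
  \sum_(i in x) a i.

Definition isroot (n k : nat) (a : 'I_n -> int) (alpha : int) (x : {set 'I_n}) : bool :=
  cover k x && (lhs a x == alpha).

(* homogenized characteristic vector (chi_x, 1) of x, used to measure affine dimension *)
Definition hom (n : nat) (x : {set 'I_n}) : 'rV[rat]_(n + 1) :=
  row_mx (\row_(j < n) ((j \in x)%:R : rat)) (const_mx 1).

(* dim conv(covers) + 1 *)
Definition rank_Q (n k : nat) : nat :=
  \rank (\sum_(x : {set 'I_n} | cover k x) genmx (hom x))%MS.

(* dim conv(roots) + 1  (the face {x in Q : a x = alpha} is conv(roots) when valid) *)
Definition rank_face (n k : nat) (a : 'I_n -> int) (alpha : int) : nat :=
  \rank (\sum_(x : {set 'I_n} | isroot k a alpha x) genmx (hom x))%MS.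

Definition valid (n k : nat) (a : 'I_n -> int) (alpha : int) : Prop :=
  forall x : {set 'I_n}, cover k x -> alpha <= lhs a x.

Definition facet (n k : nat) (a : 'I_n -> int) (alpha : int) : Prop :=
  [/\ valid k a alpha, (exists x, isroot k a alpha x) &
      rank_face k a alpha = (rank_Q n k).-1].

Definition posmult (n : nat) (a : 'I_n -> int) (alpha : int)
  (b : 'I_n -> rat) (beta : rat) : Prop :=
  exists2 l : rat, 0 < l &
    (forall j, (a j)%:~R = l * b j) /\ alpha%:~R = l * beta.

Definition boolean_facet (n k : nat) (a : 'I_n -> int) (alpha : int) : Prop :=
  exists i : 'I_n,
    [\/ posmult a alpha (fun j => (j == i)%:R) 0,
        posmult a alpha (fun j => - (j == i)%:R) (-1)
     |  posmult a alpha (fun j => (j \in Cset n k (nat_of_ord i))%:R) 1 ].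

Definition rank_constraint (n k : nat) (a : 'I_n -> int) (alpha : int) : Prop :=
  posmult a alpha (fun _ => 1) ((n + k - 1) %/ k)%:R.  (* ceil(n/k) *)

(* a^0 = min_i a_i (for n > 0) *)
Definition amin (n : nat) (a : 'I_n -> int) : int :=
  let s := [seq a i | i <- enum 'I_n] in \big[Num.min/head 0 s]_(v <- s) v.

Definition Wset (n : nat) (a : 'I_n -> int) : {set 'I_n} :=
  [set i | amin a < a i].

(* For k = 1 the only cover is Z_n, so 2 <= k and then Q(C_n^k) is full
   dimensional: the roots of the facet span a hyperplane, so any linear equation
   b x = beta satisfied by all roots is a multiple of a x = alpha.  Coefficients are
   nonnegative (otherwise the inequality would be a multiple of x_m <= 1), and each of
   1(a), 1(b), 1(c) can only fail if all roots satisfy x_i = 0, x_i = 1 or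
   |x \cap C^i| = 1, making the inequality a boolean facet (x_i >= 1 being impossible
   since Z_n \ {i} is a cover).  For 1(c), the middle one of three points of a root in
   C^i can be dropped.  Part 2 is an exchange argument: replacing i by any m of the
   interval leaves a cover, of weight alpha - a_i + a_m, so a_m >= a_i > a^0. *)

From HB Require Import structures.
From mathcomp Require Import all_boot all_order all_algebra zify ring lra.
Import Order.TTheory GRing.Theory Num.Theory.
Set Implicit Arguments. Unset Strict Implicit. Unset Printing Implicit Defensive.
Local Open Scope ring_scope.

Lemma col_proportional (F : fieldType) (p m : nat) (A : 'M[F]_(p, m)) (f e : 'cV[F]_m) :
  (\rank A).+1 = m -> A *m f = 0 -> A *m e = 0 -> e != 0 -> exists c : F, f = c *: e.
Proof.
move=> rA Af Ae e0; set K := kermx A^T.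
have fK : (f^T <= K)%MS by apply/sub_kermxP; rewrite -trmx_mul Af trmx0.
have eK : (e^T <= K)%MS by apply/sub_kermxP; rewrite -trmx_mul Ae trmx0.
have rK : \rank K = 1%N by rewrite mxrank_ker mxrank_tr -{1}rA subSnn.
have re : \rank e^T = 1%N.
  by apply/eqP; rewrite eqn_leq rank_leq_row lt0n mxrank_eq0 trmx_eq0.
have Ke : (K <= e^T)%MS by rewrite -(mxrank_leqif_sup eK).2 re rK.
have [c fc] := sub_rVP (submx_trans fK Ke).
by exists c; rewrite -(trmxK f) fc linearZ /= trmxK.
Qed.

Definition eqmod (n : nat) (p q : int) : Prop := (n%:Z %| p - q)%Z.

Lemma eqmod_refl n p : eqmod n p p.
Proof. by rewrite /eqmod subrr dvdz0. Qed.

Lemma eqmod_sym n p q : eqmod n p q -> eqmod n q p.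
Proof. by rewrite /eqmod => h; rewrite -opprB rpredN. Qed.

Lemma eqmod_lin2 n p q p1 q1 p2 q2 : eqmod n p1 q1 -> eqmod n p2 q2 ->
  p - q = (p1 - q1) + (p2 - q2) -> eqmod n p q.
Proof. by rewrite /eqmod => h1 h2 ->; apply: rpredD. Qed.

Lemma eqmod_lin1 n p q p1 q1 : eqmod n p1 q1 -> p - q = p1 - q1 -> eqmod n p q.
Proof. by move=> h e; apply: (eqmod_lin2 h (eqmod_refl n 0)); rewrite e subrr addr0. Qed.

Lemma eqmod_lin3 n p q p1 q1 p2 q2 p3 q3 :
  eqmod n p1 q1 -> eqmod n p2 q2 -> eqmod n p3 q3 ->
  p - q = (p1 - q1) + (p2 - q2) + (p3 - q3) -> eqmod n p q.
Proof. by rewrite /eqmod => h1 h2 h3 ->; apply: rpredD => //; apply: rpredD. Qed.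

Lemma eqmod_trans n p q r : eqmod n p q -> eqmod n q r -> eqmod n p r.
Proof. by move=> h1 h2; apply: (eqmod_lin2 h1 h2); rewrite addrA subrK. Qed.

Lemma cdP n p q : (0 < n)%N -> (cd n p q < n)%N /\ eqmod n q (p + (cd n p q)%:Z).
Proof.
move=> n0; have n0' : 0 < n%:Z by rewrite ltz_nat.
have E : (cd n p q)%:Z = ((q - p) %% n%:Z)%Z.
  by rewrite /cd gez0_abs // modz_ge0 // -lt0n n0.
split; first by rewrite -ltz_nat E ltz_pmod.
rewrite /eqmod E; apply/dvdzP; exists ((q - p) %/ n%:Z)%Z.
by rewrite opprD addrA {1}(divz_eq (q - p) n%:Z); ring.
Qed.

Lemma cd_eq n p q d : (d < n)%N -> eqmod n q (p + d%:Z) -> cd n p q = d.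
Proof.
move=> dn /dvdzP [z hz]; rewrite /cd.
have -> : q - p = z * n%:Z + d%:Z by rewrite -hz; ring.
by rewrite modzMDl modz_small // ltz_nat dn.
Qed.

Lemma eqmod_ord n (i j : 'I_n) : eqmod n i j -> i = j.
Proof.
move=> /dvdzP [z hz]; apply: val_inj; apply/eqP; rewrite -eqz_nat.
have lt_n (l : 'I_n) : 0 <= l%:Z < n%:Z by rewrite ltz_nat ltn_ord.
rewrite -(modz_small (lt_n i)) -(modz_small (lt_n j)).
have -> : i%:Z = z * n%:Z + j by rewrite -hz; ring.
by rewrite modzMDl.
Qed.

Lemma eqmod_ordP n (z : int) : (0 < n)%N -> exists w : 'I_n, eqmod n w z.
Proof.
move=> n0; have [lt h] := cdP 0 z n0.
by exists (Ordinal lt); apply: eqmod_sym; rewrite add0r in h.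
Qed.

Lemma cd_inj n (i : int) (p q : 'I_n) : cd n i p = cd n i q -> p = q.
Proof.
have n0 : (0 < n)%N by apply: leq_ltn_trans (ltn_ord p).
move=> e; have [_ hp] := cdP i p n0; have [_ hq] := cdP i q n0.
by apply: eqmod_ord; apply: (eqmod_trans hp); rewrite e; apply: eqmod_sym.
Qed.

Lemma CsetP n k (i : int) (j : 'I_n) : (k <= n)%N ->
  reflect (exists2 d, (d < k)%N & eqmod n j (i + d%:Z)) (j \in Cset n k i).
Proof.
move=> kn; have n0 : (0 < n)%N by apply: leq_ltn_trans (ltn_ord j).
rewrite inE; apply: (iffP idP); first by exists (cd n i j); case: (cdP i j n0).
by move=> [d dk h]; rewrite (cd_eq (leq_trans dk kn) h).
Qed.

Lemma Cset_self n k (i : 'I_n) : (0 < k)%N -> i \in Cset n k i.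
Proof.
move=> k0; rewrite inE (@cd_eq n i i 0) //; first exact: leq_ltn_trans (ltn_ord i).
by rewrite addr0; apply: eqmod_refl.
Qed.

Lemma cintP n p q (m : 'I_n) : m \in cint n p q ->
  exists2 s, (s <= cd n p q)%N & eqmod n m (p + s%:Z).
Proof.
have n0 : (0 < n)%N by apply: leq_ltn_trans (ltn_ord m).
by rewrite inE => h; exists (cd n p m) => //; case: (cdP p m n0).
Qed.

Lemma coverP n k (x : {set 'I_n}) :
  reflect (forall l : 'I_n, exists2 w, w \in x & w \in Cset n k l) (cover k x).
Proof.
apply: (iffP forallP) => h l.
  by have /existsP [w /andP [wC wx]] := h l; exists w.
by have [w wx wC] := h l; apply/existsP; exists w; rewrite wx wC.
Qed.

Lemma coverS n k (x y : {set 'I_n}) : x \subset y -> cover k x -> cover k y.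
Proof.
move=> sxy /coverP h; apply/coverP => l; have [w wx wC] := h l.
by exists w => //; apply: (subsetP sxy).
Qed.

Lemma cover_replace n k (x y : {set 'I_n}) (i : 'I_n) :
  cover k x -> x :\ i \subset y ->
  (forall l : 'I_n, i \in Cset n k l -> exists2 w, w \in y & w \in Cset n k l) ->
  cover k y.
Proof.
move=> /coverP cx sxy hi; apply/coverP => l; have [w wx wC] := cx l.
have [wi | wi] := eqVneq w i; first by apply: hi; rewrite -wi.
by exists w => //; apply: (subsetP sxy); rewrite in_setD1 wi wx.
Qed.

Lemma cover_Cset_card_gt0 n k (x : {set 'I_n}) (i : 'I_n) :
  cover k x -> (0 < #|x :&: Cset n k i|)%N.
Proof.
by move=> /coverP h; have [w wx wC] := h i; apply/card_gt0P; exists w; rewrite inE wx wC.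
Qed.

Lemma cover_setT n k : (0 < k)%N -> cover k [set: 'I_n].
Proof. by move=> k0; apply/coverP => l; exists l; rewrite ?in_setT ?Cset_self. Qed.

Lemma cover_setTD1 n k (j : 'I_n) : (1 < k)%N -> (k <= n)%N -> cover k ([set: 'I_n] :\ j).
Proof.
move=> k2 kn; have n2 : (1 < n)%N by apply: leq_trans kn.
apply/coverP => l; have [-> | lj] := eqVneq l j; last first.
  by exists l; [rewrite !inE lj | rewrite Cset_self // ltnW].
have [w hw] := @eqmod_ordP n (j%:Z + 1) (ltnW n2).
exists w; last by apply/(CsetP _ _ kn); exists 1%N.
rewrite !inE andbT; apply: contraTneq n2 => wj; move: hw; rewrite wj.
by rewrite /eqmod opprD addrA subrr add0r rpredN dvdzE /= dvdn1 => /eqP ->.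
Qed.

Definition ineq_col n (b : 'I_n -> rat) (beta : rat) : 'cV[rat]_(n + 1) :=
  col_mx (\col_j b j) (const_mx (- beta)).

Lemma hom_ineq_col n (x : {set 'I_n}) b beta :
  hom x *m ineq_col b beta = (\sum_(j in x) b j - beta)%:M.
Proof.
rewrite mul_row_col; apply/matrixP => i j; rewrite !ord1 !mxE big_ord1 !mxE mul1r.
congr (_ + _); rewrite [RHS]big_mkcond; apply: eq_bigr => l _; rewrite !mxE.
by case: (l \in x); rewrite ?mul1r ?mul0r.
Qed.

Lemma hom_neq0 n (x : {set 'I_n}) : hom x != 0.
Proof.
apply/eqP => /(congr1 (fun M : 'rV[rat]_(n + 1) => M 0 (rshift n ord0))).
by rewrite row_mxEr !mxE => /eqP; rewrite oner_eq0.
Qed.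

Lemma hom_sub_span n (P : pred {set 'I_n}) (x : {set 'I_n}) :
  P x -> (hom x <= \sum_(y | P y) genmx (hom y))%MS.
Proof. by move=> Px; apply: (sumsmx_sup x) => //; rewrite genmxE. Qed.

Lemma span_mul_col0 n (P : pred {set 'I_n}) (f : 'cV[rat]_(n + 1)) :
  (forall x, P x -> hom x *m f = 0) -> (\sum_(x | P x) genmx (hom x))%MS *m f = 0.
Proof.
move=> h; apply/sub_kermxP; apply/sumsmx_subP => x Px.
by rewrite genmxE; apply/sub_kermxP; apply: h.
Qed.

(* The unit vectors are differences hom [set: _] - hom ([set: _] :\ j), and the last
   one is hom [set: _] minus their sum. *)
Lemma rank_Q_full n k : (1 < k)%N -> (k <= n)%N -> rank_Q n k = (n + 1)%N.
Proof.
move=> k2 kn; rewrite /rank_Q; set R := (\sum_(y | _) _)%MS.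
have homR x : cover k x -> (hom x <= R)%MS by apply: hom_sub_span.
have cT : cover k [set: 'I_n] by apply: cover_setT; apply: ltnW.
have eL (j : 'I_n) : (('e_(lshift 1 j) : 'rV_(n + 1)) <= R)%MS.
  have -> : ('e_(lshift 1 j) : 'rV_(n + 1)) = hom [set: 'I_n] - hom ([set: 'I_n] :\ j).
    apply/rowP => l; rewrite !mxE; case: (split_ordP l) => l' ->.
      rewrite !mxE eq_lshift !inE andbT.
      by case: (l' == j); rewrite ?subr0 ?subrr.
    by rewrite !mxE eq_rlshift subrr.
  by rewrite addmx_sub ?eqmx_opp ?homR ?cover_setTD1.
have eR : (('e_(rshift n ord0) : 'rV_(n + 1)) <= R)%MS.
  have -> : ('e_(rshift n ord0) : 'rV_(n + 1))
      = hom [set: 'I_n] - \sum_(j < n) 'e_(lshift 1 j).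
    apply/rowP => l; rewrite !mxE summxE; case: (split_ordP l) => l' ->.
      rewrite ?row_mxEl !mxE eq_lrshift in_setT (bigD1 l') //= big1 ?mxE.
        by rewrite !eqxx addr0 subrr.
      by move=> j hj; rewrite !mxE eq_lshift eq_sym (negbTE hj).
    rewrite ?row_mxEr !mxE eq_rshift ord1 big1 ?subr0 // => j _.
    by rewrite !mxE eq_rlshift.
  by rewrite addmx_sub ?eqmx_opp ?homR //; apply: summx_sub => j _.
have R1 : ((1%:M : 'M[rat]_(n + 1)) <= R)%MS.
  apply/row_subP => i; rewrite row1; case: (split_ordP i) => i' ->; first exact: eL.
  by rewrite ord1.
by apply/eqP; rewrite eqn_leq rank_leq_col -{1}(mxrank1 rat (n + 1)) mxrankS.
Qed.

Lemma lhs_setU1 n (a : 'I_n -> int) (x : {set 'I_n}) m :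
  m \notin x -> lhs a (m |: x) = a m + lhs a x.
Proof. exact: big_setU1. Qed.

Lemma lhs_setD1 n (a : 'I_n -> int) (x : {set 'I_n}) m :
  m \in x -> lhs a x = a m + lhs a (x :\ m).
Proof. exact: big_setD1. Qed.

Lemma sum_eq1 n (x : {set 'I_n}) m : \sum_(j in x) ((j == m)%:R : rat) = (m \in x)%:R.
Proof.
rewrite big_mkcond (bigD1 m) //= eqxx big1 ?addr0; first by case: (m \in x).
by move=> j /negbTE ->; case: (j \in x).
Qed.

Lemma sum_mem_card n (x C : {set 'I_n}) :
  \sum_(j in x) ((j \in C)%:R : rat) = #|x :&: C|%:R.
Proof.
rewrite -sumr_const big_mkcond [RHS]big_mkcond; apply: eq_bigr => j _.
by rewrite inE; case: (j \in x); case: (j \in C).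
Qed.

Lemma amin_ge0 n (a : 'I_n -> int) : (forall i, 0 <= a i) -> 0 <= amin a.
Proof.
move=> ha; rewrite /amin big_seq; apply: (big_ind (fun v : int => 0 <= v)).
- by case: (enum 'I_n) => [|h t] //=.
- by move=> u v hu hv; rewrite le_min hu hv.
- by move=> v /mapP [i _ ->].
Qed.

Lemma facet_not_all_roots n k (a : 'I_n -> int) alpha : facet k a alpha ->
  ~ (forall x, cover k x -> isroot k a alpha x).
Proof.
move=> [_ [x0 /andP [c0 _]] rF] allr.
have eF : rank_face k a alpha = rank_Q n k.
  rewrite /rank_face /rank_Q; congr (\rank _); apply: eq_bigl => x.
  by apply/idP/idP => [/andP [] | /allr].
have : (0 < rank_Q n k)%N.
  apply: leq_trans (mxrankS (hom_sub_span (P := cover k) c0)).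
  by rewrite lt0n mxrank_eq0 hom_neq0.
by move: rF; rewrite eF; lia.
Qed.

Lemma facet_nontrivial n k (a : 'I_n -> int) alpha : facet k a alpha ->
  (forall j, a j = 0) -> alpha = 0 -> False.
Proof.
move=> F a0 alpha0; apply: (facet_not_all_roots F) => x cx.
by rewrite /isroot cx /lhs big1 // alpha0.
Qed.

Lemma facet_k_gt1 n k (a : 'I_n -> int) alpha : (0 < k)%N -> (k <= n)%N ->
  facet k a alpha -> (1 < k)%N.
Proof.
move=> k0 kn F; rewrite ltn_neqAle eq_sym k0 andbT; apply/eqP => k1.
have allT (y : {set 'I_n}) : cover k y -> y = setT.
  move=> /coverP cy; apply/setP => l; rewrite in_setT.
  case: (cy l) => w wy /(CsetP _ _ kn) [d].
  by rewrite k1 ltnS leqn0 => /eqP ->; rewrite addr0 => /eqmod_ord <-.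
apply: (facet_not_all_roots F) => y cy.
have [_ [x0 rx0] _] := F; have /andP [c0 _] := rx0.
by rewrite (allT y cy) -(allT x0 c0).
Qed.

Lemma cover_setD1_between n k (x : {set 'I_n}) (i : int) (p1 p2 p3 : 'I_n) :
  (k <= n)%N -> cover k x -> p1 \in x -> p3 \in x ->
  (cd n i p1 < cd n i p2 < cd n i p3)%N -> (cd n i p3 < k)%N -> cover k (x :\ p2).
Proof.
move=> kn cx p1x p3x /andP [lt12 lt23] p3k.
have n0 : (0 < n)%N by apply: leq_ltn_trans (ltn_ord p1).
have [_ h1] := cdP i p1 n0; have [_ h2] := cdP i p2 n0; have [_ h3] := cdP i p3 n0.
apply: (cover_replace cx (subxx _)) => l /(CsetP _ _ kn) [u uk hu].
case: (leqP (cd n i p2 - cd n i p1) u) => hu2.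
  exists p1.
    by rewrite in_setD1 p1x andbT; apply: contraTneq lt12 => ->; rewrite ltnn.
  apply/(CsetP _ _ kn); exists (u - (cd n i p2 - cd n i p1))%N; first lia.
  by apply: (eqmod_lin3 h1 (eqmod_sym h2) hu); lia.
exists p3.
  by rewrite in_setD1 p3x andbT; apply: contraTneq lt23 => ->; rewrite ltnn.
apply/(CsetP _ _ kn); exists (u + (cd n i p3 - cd n i p2))%N; first lia.
by apply: (eqmod_lin3 h3 (eqmod_sym h2) hu); lia.
Qed.

Section FacetsOfQ.

Variables (n k : nat) (a : 'I_n -> int) (alpha : int).
Hypotheses (k_gt1 : (1 < k)%N) (k_le_n : (k <= n)%N) (F : facet k a alpha).

Lemma facet_proportional (b : 'I_n -> rat) (beta : rat) :
  (forall x, isroot k a alpha x -> \sum_(j in x) b j = beta) -> (exists j, b j != 0) ->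
  exists c : rat, (forall j, (a j)%:~R = c * b j) /\ alpha%:~R = c * beta.
Proof.
move=> Hb [j0 bj0].
have rF : (rank_face k a alpha).+1 = (n + 1)%N.
  by case: F => _ _ ->; rewrite rank_Q_full // addn1.
have Ha : (\sum_(x | isroot k a alpha x) genmx (hom x))%MS
    *m ineq_col (fun j => (a j)%:~R) alpha%:~R = 0.
  apply: span_mul_col0 => x /andP [_ /eqP <-].
  by rewrite hom_ineq_col /lhs rmorph_sum subrr raddf0.
have Hb' : (\sum_(x | isroot k a alpha x) genmx (hom x))%MS *m ineq_col b beta = 0.
  by apply: span_mul_col0 => x rx; rewrite hom_ineq_col Hb // subrr raddf0.
have nz : ineq_col b beta != 0.
  apply: contraNneq bj0 => /(congr1 (fun M : 'cV[rat]_(n + 1) => M (lshift 1 j0) 0)).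
  by rewrite col_mxEu !mxE => ->.
have [c hc] := col_proportional rF Ha Hb' nz.
exists c; split => [j|].
  have := congr1 (fun M : 'cV[rat]_(n + 1) => M (lshift 1 j) 0) hc.
  by rewrite scale_col_mx !col_mxEu !mxE.
have := congr1 (fun M : 'cV[rat]_(n + 1) => M (rshift n ord0) 0) hc.
by rewrite scale_col_mx !col_mxEd !mxE mulrN => /oppr_inj.
Qed.

Hypothesis not_boolean : ~ boolean_facet k a alpha.

Lemma facet_coef_ge0 (m : 'I_n) : 0 <= a m.
Proof.
rewrite leNgt; apply/negP => am.
have [V _ _] := F.
have mroot x : isroot k a alpha x -> m \in x.
  case/andP => cx /eqP lx; apply/negPn/negP => mx.
  by have := V _ (coverS (subsetUr [set m] x) cx); rewrite lhs_setU1 // lx; lia.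
have [c [ha hal]] : exists c : rat,
    (forall j, (a j)%:~R = c * (j == m)%:R) /\ alpha%:~R = c * 1.
  apply: facet_proportional; last by exists m; rewrite eqxx oner_neq0.
  by move=> x /mroot mx; rewrite sum_eq1 mx.
have cm : c = (a m)%:~R by rewrite ha eqxx mulr1.
apply: not_boolean; exists m; apply: Or32; exists (- c); first by rewrite oppr_gt0 cm ltrz0.
by split => [j|]; rewrite ?ha ?hal mulrNN.
Qed.

Lemma root_eq_posmult (b : 'I_n -> rat) (beta : rat) (i : 'I_n) :
  (forall x, isroot k a alpha x -> \sum_(j in x) b j = beta) -> b i = 1 ->
  posmult a alpha b beta.
Proof.
move=> Hb bi; have [|c [ha hal]] := facet_proportional Hb.
  by exists i; rewrite bi oner_neq0.
have c0 : c != 0.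
  apply/eqP => c0; apply: (facet_nontrivial F) => [j|];
    by apply/eqP; rewrite -(intr_eq0 rat) ?ha ?hal c0 mul0r.
exists c => //; rewrite lt_def c0 /= (_ : c = (a i)%:~R) ?ler0z ?facet_coef_ge0 //.
by rewrite ha bi mulr1.
Qed.

Lemma exists_root_mem (i : 'I_n) : exists2 x, isroot k a alpha x & i \in x.
Proof.
case: (pickP (fun x => isroot k a alpha x && (i \in x))) => [x /andP [] | none].
  by exists x.
exfalso; apply: not_boolean; exists i; apply: Or31.
apply: (@root_eq_posmult _ _ i); last by rewrite eqxx.
by move=> x rx; rewrite sum_eq1; have := none x; rewrite rx /= => ->.
Qed.

Lemma exists_root_notin (i : 'I_n) : exists2 x, isroot k a alpha x & i \notin x.
Proof.
case: (pickP (fun x => isroot k a alpha x && (i \notin x))) => [x /andP [] | none].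
  by exists x.
have Hs x : isroot k a alpha x -> \sum_(j in x) ((j == i)%:R : rat) = 1.
  by move=> rx; rewrite sum_eq1; have := none x; rewrite rx /= => /negbFE ->.
have [c c_gt0 [ha hal]] : posmult a alpha (fun j => (j == i)%:R) 1.
  by apply: (@root_eq_posmult _ _ i Hs); rewrite eqxx.
have [V _ _] := F.
have := V _ (cover_setTD1 i k_gt1 k_le_n); rewrite /lhs big1 => [|j].
  by rewrite -(lerz0 rat) hal mulr1 leNgt c_gt0.
rewrite !inE andbT => ji; apply/eqP.
by rewrite -(intr_eq0 rat) ha (negbTE ji) mulr0.
Qed.

Lemma exists_root_meet_ge2 (i : 'I_n) :
  exists2 x, isroot k a alpha x & (1 < #|x :&: Cset n k i|)%N.
Proof.
case: (pickP (fun x => isroot k a alpha x && (1 < #|x :&: Cset n k i|)%N)).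
  by move=> x /andP []; exists x.
move=> none; exfalso; apply: not_boolean; exists i; apply: Or33.
apply: (@root_eq_posmult _ _ i); last by rewrite Cset_self // ltnW.
move=> x rx; rewrite sum_mem_card; have := none x; rewrite rx /=.
by have := cover_Cset_card_gt0 i (proj1 (andP rx)); case: #|_| => [|[|]].
Qed.

Lemma root_setD1 (x : {set 'I_n}) (p : 'I_n) :
  isroot k a alpha x -> p \in x -> cover k (x :\ p) -> isroot k a alpha (x :\ p).
Proof.
move=> /andP [_ /eqP lx] px cy; have [V _ _] := F.
have := V _ cy; have := lhs_setD1 a px; have := facet_coef_ge0 p.
rewrite /isroot cy lx => ? ? ?; apply/eqP; lra.
Qed.

Lemma exists_root_meet_pred (i : 'I_n) (x : {set 'I_n}) :
  isroot k a alpha x -> (2 < #|x :&: Cset n k i|)%N ->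
  exists2 y, isroot k a alpha y & #|y :&: Cset n k i| = #|x :&: Cset n k i|.-1.
Proof.
set X := x :&: Cset n k i => rx X3.
have [p0 p0X] : exists p0, p0 \in X by apply/card_gt0P; apply: ltnW (ltnW X3).
have [p1 p1X p1min] :
    exists2 p1, p1 \in X & forall p, p \in X -> (cd n i p1 <= cd n i p)%N.
  by case: (arg_minnP (fun p : 'I_n => cd n i p) p0X) => p1; exists p1.
have [p3 p3X p3max] :
    exists2 p3, p3 \in X & forall p, p \in X -> (cd n i p <= cd n i p3)%N.
  by case: (arg_maxnP (fun p : 'I_n => cd n i p) p0X) => p3; exists p3.
have [p2 p2X] : exists p2, p2 \in X :\ p1 :\ p3.
  apply/card_gt0P; move: X3; rewrite (cardsD1 p1 X) p1X (cardsD1 p3 (X :\ p1)).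
  by case: (p3 \in X :\ p1) => /=; rewrite ?add0n ?add1n ?ltnS // => /ltnW.
move: p2X; rewrite !inE => /and3P [p23 p21 /andP [p2x p2C]].
move: p1X p3X; rewrite !inE => /andP [p1x _] /andP [p3x p3C].
have o12 : (cd n i p1 < cd n i p2)%N.
  rewrite ltn_neqAle p1min ?inE ?p2x // andbT.
  by apply: contra p21 => /eqP /cd_inj ->.
have o23 : (cd n i p2 < cd n i p3)%N.
  rewrite ltn_neqAle p3max ?inE ?p2x // andbT.
  by apply: contra p23 => /eqP /cd_inj ->.
have cy : cover k (x :\ p2).
  apply: (@cover_setD1_between n k x i p1 p2 p3 k_le_n (proj1 (andP rx)) p1x p3x).
    by rewrite o12 o23.
  by move: p3C; rewrite ?inE.
exists (x :\ p2); first exact: root_setD1.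
have -> : (x :\ p2) :&: Cset n k i = X :\ p2 by rewrite setIDAC.
by rewrite (cardsD1 p2 X) !inE p2x p2C.
Qed.

Lemma exists_root_meet_eq2 (i : 'I_n) :
  exists2 x, isroot k a alpha x & #|x :&: Cset n k i| = 2%N.
Proof.
have [x rx x2] := exists_root_meet_ge2 i.
suff: forall N y, isroot k a alpha y -> #|y :&: Cset n k i| = N -> (1 < N)%N ->
    exists2 z, isroot k a alpha z & #|z :&: Cset n k i| = 2%N.
  by move=> /(_ _ x rx erefl x2).
elim=> [// | N IH] y ry yN N1.
have [N2 | N2] := ltnP 2 N.+1.
  have [|z rz zN] := exists_root_meet_pred (i := i) ry; first by rewrite yN.
  by apply: (IH z rz); [rewrite zN yN | exact: N2].
by exists y => //; rewrite yN; apply/eqP; rewrite eqn_leq N2.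
Qed.

Lemma mem_Wset_exchange (i m : 'I_n) (x : {set 'I_n}) :
  i \in Wset a -> isroot k a alpha x -> i \in x ->
  cover k (m |: (x :\ i)) -> m \in Wset a.
Proof.
rewrite !inE => iW /andP [_ /eqP lx] ix cy; have [V _ _] := F.
have := amin_ge0 facet_coef_ge0; have := V _ cy; have := lhs_setD1 a ix.
rewrite lx; have [mx | mx] := boolP (m \in x :\ i).
  by rewrite (setUidPr _) ?sub1set //; lra.
by rewrite lhs_setU1 //; lra.
Qed.

Lemma cint_sub_Wset_right (i j : 'I_n) (x : {set 'I_n}) :
  i \in Wset a -> isroot k a alpha x -> i \in x ->
  j != i -> j \in x -> j \in Cset n k (i%:Z - k%:Z + 1) ->
  cint n i (j%:Z + k%:Z) \subset Wset a.
Proof.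
move=> iW rx ix ji jx /(CsetP _ _ k_le_n) [t tk ht].
have tk1 : (t.+1 < k)%N.
  rewrite ltn_neqAle tk andbT; apply: contra ji => /eqP tk1.
  by apply/eqP/eqmod_ord/(eqmod_lin1 ht); lia.
have ecd : cd n i (j%:Z + k%:Z) = t.+1.
  by apply: cd_eq; [lia | apply: (eqmod_lin1 ht); lia].
apply/subsetP => m /cintP [s]; rewrite ecd => st hm.
have [s0 | s_gt0] := posnP s.
  by rewrite (@eqmod_ord _ m i) //; move: hm; rewrite s0 addr0.
apply: (mem_Wset_exchange iW rx ix).
apply: (cover_replace (proj1 (andP rx)) (subsetUr _ _)) => l /(CsetP _ _ k_le_n) [u uk hu].
have [ut | ut] := leqP k (u + t.+1).
  exists j; first by rewrite !inE ji jx orbT.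
  apply/(CsetP _ _ k_le_n); exists (u + t.+1 - k)%N; first lia.
  by apply: (eqmod_lin2 ht hu); lia.
exists m; first by rewrite !inE eqxx.
apply/(CsetP _ _ k_le_n); exists (u + s)%N; first lia.
by apply: (eqmod_lin2 hm hu); lia.
Qed.

Lemma cint_sub_Wset_left (i j : 'I_n) (x : {set 'I_n}) :
  i \in Wset a -> isroot k a alpha x -> i \in x ->
  j != i -> j \in x -> j \in Cset n k i ->
  cint n (j%:Z - k%:Z) i \subset Wset a.
Proof.
move=> iW rx ix ji jx /(CsetP _ _ k_le_n) [t tk ht].
have t_gt0 : (0 < t)%N.
  rewrite lt0n; apply: contra ji => /eqP t0.
  by apply/eqP/eqmod_ord/(eqmod_lin1 ht); lia.
have ecd : cd n (j%:Z - k%:Z) i = (k - t)%N.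
  by apply: cd_eq; [lia | apply: (eqmod_lin1 (eqmod_sym ht)); lia].
apply/subsetP => m /cintP [s]; rewrite ecd => st hm.
have [st' | ts] := ltnP s (k - t); last first.
  by rewrite (@eqmod_ord _ m i) //; apply: (eqmod_lin2 hm ht); lia.
apply: (mem_Wset_exchange iW rx ix).
apply: (cover_replace (proj1 (andP rx)) (subsetUr _ _)) => l /(CsetP _ _ k_le_n) [u uk hu].
have [ut | ut] := ltnP (u + t) k.
  exists j; first by rewrite !inE ji jx orbT.
  by apply/(CsetP _ _ k_le_n); exists (u + t)%N => //; apply: (eqmod_lin2 ht hu); lia.
exists m; first by rewrite !inE eqxx.
apply/(CsetP _ _ k_le_n); exists (u + t + s - k)%N; first lia.
by apply: (eqmod_lin3 hm ht hu); lia.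
Qed.

End FacetsOfQ.

Theorem mainTheorem1 (n k : nat) (a : 'I_n -> int) (alpha : int) :
  (1 <= k)%N -> (k <= n - 1)%N ->
  facet k a alpha ->
  ~ boolean_facet k a alpha ->
  ~ rank_constraint k a alpha ->
  (forall i : 'I_n,
     [/\ exists2 x, isroot k a alpha x & i \in x,
         exists2 x, isroot k a alpha x & i \notin x
       & exists2 x, isroot k a alpha x & #|x :&: Cset n k (nat_of_ord i)| = 2%N])
  /\
  (forall (i : 'I_n) (x : {set 'I_n}),
     i \in Wset a -> isroot k a alpha x -> i \in x ->
     (forall j : 'I_n, j != i -> j \in x ->
        j \in Cset n k ((nat_of_ord i)%:Z - k%:Z + 1) ->
        cint n (nat_of_ord i) ((nat_of_ord j)%:Z + k%:Z) \subset Wset a)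
     /\
     (forall j : 'I_n, j != i -> j \in x ->
        j \in Cset n k (nat_of_ord i) ->
        cint n ((nat_of_ord j)%:Z - k%:Z) (nat_of_ord i) \subset Wset a)).
Proof.
move=> k_gt0 k_lt_n F not_boolean _.
have k_le_n : (k <= n)%N by apply: leq_trans k_lt_n (leq_subr 1 n).
have k_gt1 := facet_k_gt1 k_gt0 k_le_n F.
split=> [i | i x iW rx ix]; first split.
- by apply: (exists_root_mem _ _ _ _ i).
- by apply: (exists_root_notin _ _ _ _ i).
- by apply: (exists_root_meet_eq2 _ _ _ _ i).
split=> j.
  by apply: (cint_sub_Wset_right _ _ _ _ iW rx ix).
by apply: (cint_sub_Wset_left _ _ _ _ iW rx ix).
Qed.
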